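(* Fix a positive integer $m$ and positive reals $r_1,\dots,r_m$, and let $r=\max_jr_j$. Then for every $\varepsilon>0$ there exist $\vec\mu\in\mathbb{R}^m_{>0}$ and $\vec\sigma\in\mathbb{R}^m_{\ge0}$ with $\sigma_j/\mu_j=r_j$ for all $j$, such that for every truthful mechanism $A$ there is a product distribution $F=F_1\times\cdots\times F_m$, with each $F_j$ having mean $\mu_j$ and standard deviation at most $\sigma_j$, satisfying \[\frac{\mathrm{OPT}(F)}{\mathrm{REV}(A;F)}\ge 1-\varepsilon+\ln(1+r^2).\] In particular $\mathrm{APX}(\vec\mu,\vec\sigma)\ge1-\varepsilon+\ln(1+r^2)$.
   Context: One buyer with additive valuation for $m$ items with values $\vec v=(v_1,\dots,v_m)\sim F$ on $\mathbb{R}^m_{\ge0}$. $\mathbb{F}_{\vec\mu,\vec\sigma}$ is the class of joint distributions whose $j$-th marginal has mean $\mu_j$ and standard deviation at most $\sigma_j$. A mechanism is a pair $(x,\pi)$ with $x:\mathbb{R}^m_{\ge0}\to[0,1]^m$, $\pi:\mathbb{R}^m_{\ge0}\to\mathbb{R}_{\ge0}$; it is truthful if $x(\vec v)\cdot\vec v-\pi(\vec v)\ge x(\vec w)\cdot\vec v-\pi(\vec w)$ and $x(\vec v)\cdot\vec v-\pi(\vec v)\ge0$ for all $\vec v,\vec w$. $\mathrm{REV}(A;F)=\mathbb{E}_{\vec v\sim F}[\pi(\vec v)]$, $\mathrm{OPT}(F)$ is the supremum of $\mathrm{REV}$ over truthful mechanisms, and $\mathrm{APX}(\vec\mu,\vec\sigma)=\inf_A\sup_{F\in\mathbb{F}_{\vec\mu,\vec\sigma}}\mathrm{OPT}(F)/\mathrm{REV}(A;F)$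 over truthful $A$ (zero denominators give $+\infty$). *)

From HB Require Import structures.
From mathcomp Require Import all_boot all_order all_algebra.
From mathcomp Require Import all_classical all_reals all_analysis.
Set Implicit Arguments. Unset Strict Implicit. Unset Printing Implicit Defensive.
Import Order.TTheory GRing.Theory Num.Theory.
Local Open Scope classical_set_scope.
Local Open Scope ring_scope.

(* Valuation vectors are m-tuples of reals, with the product sigma-algebra. *)
Definition nonneg_vec (R : realType) (m : nat) (v : m.-tuple R) : Prop :=
  forall j : 'I_m, 0 <= tnth v j.

Definition mechanism (R : realType) (m : nat) : Type :=
  ((m.-tuple R -> 'I_m -> R) * (m.-tuple R -> R))%type.

Definition alloc (R : realType) (m : nat) (A : mechanism R m) := A.1.
Definition pay (R : realType) (m : nat) (A : mechanism R m) := A.2.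

Definition utility (R : realType) (m : nat) (A : mechanism R m)
  (v w : m.-tuple R) : R :=
  \sum_(j < m) alloc A w j * tnth v j - pay A w.

(* Truthful mechanism on R^m_{>=0}: x maps into [0,1]^m, pi into R_{>=0},
   incentive compatible and individually rational; the payment rule is
   required to be (Borel) measurable so that REV is an expectation. *)
Definition truthful (R : realType) (m : nat) (A : mechanism R m) : Prop :=
  [/\ (forall v, nonneg_vec v -> forall j, 0 <= alloc A v j <= 1),
      (forall v, nonneg_vec v -> 0 <= pay A v),
      (forall v w, nonneg_vec v -> nonneg_vec w -> utility A v w <= utility A v v),
      (forall v, nonneg_vec v -> 0 <= utility A v v) &
      measurable_fun [set: m.-tuple R] (pay A)].

Local Open Scope ereal_scope.

Definition REV (R : realType) (m : nat) (A : mechanism R m)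
  (F : probability (m.-tuple R) R) : \bar R :=
  \int[F]_v (pay A v)%:E.

Definition OPT (R : realType) (m : nat) (F : probability (m.-tuple R) R) : \bar R :=
  ereal_sup [set REV A F | A in [set A : mechanism R m | truthful A]].

Definition eratio (R : realType) (a b : \bar R) : \bar R :=
  if b == 0 then +oo else a * ((fine b)^-1)%:E.

Definition in_class (R : realType) (m : nat) (mu sigma : 'I_m -> R)
  (F : probability (m.-tuple R) R) : Prop :=
  F [set v | nonneg_vec v] = 1 /\
  forall j : 'I_m,
    \int[F]_v (tnth v j)%:E = (mu j)%:E /\
    \int[F]_v ((tnth v j - mu j) ^+ 2)%:E <= (sigma j ^+ 2)%:E.

Definition marginal_ok (R : realType) (mu sigma : R) (G : probability R R) : Prop :=
  [/\ G [set x | (0 <= x)%R] = 1,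
      \int[G]_x x%:E = mu%:E &
      \int[G]_x ((x - mu) ^+ 2)%:E <= (sigma ^+ 2)%:E].

Definition is_product (R : realType) (m : nat)
  (F : probability (m.-tuple R) R) (Fs : 'I_m -> probability R R) : Prop :=
  forall B : 'I_m -> set R, (forall j, measurable (B j)) ->
    F [set v | forall j, B j (tnth v j)] = \prod_(j < m) Fs j (B j).

Definition APX (R : realType) (m : nat) (mu sigma : 'I_m -> R) : \bar R :=
  ereal_inf [set ereal_sup [set eratio (OPT F) (REV A F) |
                              F in [set F | in_class mu sigma F]]
            | A in [set A : mechanism R m | truthful A]].

(* The hard instance puts all the uncertainty on an item k with the largest
   ratio r_k: its value is t with probability 1/t and 0 otherwise (mean 1,
   variance t - 1 <= r_k^2 when t <= 1 + r_k^2), while every other item is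
   worth a small constant delta.  Posting the price t on item k earns 1, so
   OPT >= 1.
   Fix a truthful mechanism and let only the value s of item k vary.  The
   utility u(s) is convex with slope the allocation X(s) <= 1 of item k, and
   the payment is P(s) ~ s X(s) - u(s).  If P(s) > s/c on all of
   [1, T] with T = 1 + r_k^2, then (u(s)/s)' = P(s)/s^2 > 1/(c s), so
   u(T)/T > ln(T)/c, whereas u(T) <= T - P(T) < T (1 - 1/c); thus
   c > 1 + ln T.  Hence for c = 1 - eps + ln T some t in [1, T] has
   P(t)/t <= 1/c, and the mechanism earns about P(t)/t <= 1/c on the
   instance for this t.  The derivative argument is run on a fine grid, and
   delta only costs an error of order eps. *)

From HB Require Import structures.
From mathcomp Require Import all_boot all_order all_algebra.
From mathcomp Require Import all_classical all_reals all_analysis.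
From mathcomp Require Import measurable_realfun ring lra.
Import Order.TTheory GRing.Theory Num.Theory.
Local Open Scope classical_set_scope.
Local Open Scope ring_scope.
Set Implicit Arguments.
Unset Strict Implicit.

Definition two_point_fun (T : Type) (a b : T) : bool -> T :=
  fun x => if x then a else b.

Lemma measurable_two_point_fun d (T : measurableType d) (a b : T) :
  measurable_fun [set: bool] (two_point_fun a b).
Proof. by []. Qed.

HB.instance Definition _ d (T : measurableType d) (a b : T) :=
  isMeasurableFun.Build _ _ bool T (two_point_fun a b)
    (measurable_two_point_fun a b).

Definition two_point (R : realType) d (T : measurableType d) (q : R) (a b : T) :
  probability T R := distribution (bernoulli_prob q) (two_point_fun a b).

Section TwoPoint.
Variables (R : realType) (d : measure_display) (T : measurableType d).
Variables (q : R) (a b : T).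

Lemma two_point_setT (S : set T) : S a -> S b -> two_point q a b S = 1%E.
Proof.
move=> Sa Sb; rewrite /two_point /= /pushforward.
rewrite (_ : _ @^-1` _ = setT) ?probability_setT //.
by apply/seteqP; split => // -[].
Qed.

Lemma two_point_set0 (S : set T) : ~ S a -> ~ S b -> two_point q a b S = 0%E.
Proof.
move=> Sa Sb; rewrite /two_point /= /pushforward.
rewrite (_ : _ @^-1` _ = set0) ?measure0 //.
by apply/seteqP; split => // -[].
Qed.

Hypothesis q01 : 0 <= q <= 1.

Lemma integral_two_point (h : T -> R) : measurable_fun [set: T] h ->
  (\int[two_point q a b]_v (h v)%:E = (q * h a + (1 - q) * h b)%:E)%E.
Proof.
move=> mh; rewrite integralE funerpos funerneg.
have mEFin (g : T -> R) :
    measurable_fun [set: T] g -> measurable_fun [set: T] (EFin \o g : T -> \bar R).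
  by move=> mg; exact: measurableT_comp.
have mpos := mEFin _ (measurable_funrpos mh).
have mneg := mEFin _ (measurable_funrneg mh).
rewrite !ge0_integral_pushforward //=.
all: try by move=> y _; rewrite lee_fin ?funrpos_ge0 ?funrneg_ge0.
rewrite !integral_bernoulli_prob //=.
all: try by move=> y; rewrite lee_fin ?funrpos_ge0 ?funrneg_ge0.
rewrite -!EFinM -!EFinD /unstable.onem; congr EFin.
have posBneg x : h x = h^\+ x - h^\- x by rewrite -[in LHS](funrposBneg h).
by rewrite (posBneg a) (posBneg b); ring.
Qed.

End TwoPoint.

Lemma two_point_marginal_ok (R : realType) (q mu sigma x y : R) :
  0 <= q <= 1 ->
  0 <= x -> 0 <= y -> q * x + (1 - q) * y = mu ->
  q * (x - mu) ^+ 2 + (1 - q) * (y - mu) ^+ 2 <= sigma ^+ 2 ->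
  marginal_ok mu sigma (two_point q x y).
Proof.
move=> q01 x0 y0 mean var; split.
- exact: two_point_setT.
- by rewrite (integral_two_point _ _ q01 (h := id)) ?mean //; exact: measurable_id.
- rewrite integral_two_point ?lee_fin //.
  exact/measurable_funX/measurable_funB.
Qed.

Lemma two_point_in_class (R : realType) (m : nat) (q : R) (a b : m.-tuple R)
    (mu sigma : 'I_m -> R) :
  0 <= q <= 1 -> nonneg_vec a -> nonneg_vec b ->
  (forall j, q * tnth a j + (1 - q) * tnth b j = mu j) ->
  (forall j, q * (tnth a j - mu j) ^+ 2 + (1 - q) * (tnth b j - mu j) ^+ 2
             <= sigma j ^+ 2) ->
  in_class mu sigma (two_point q a b).
Proof.
move=> q01 a0 b0 mean var; split; first exact: two_point_setT.
move=> j; split.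
- rewrite (integral_two_point _ _ q01 (h := fun v : m.-tuple R => tnth v j)) ?mean //.
  exact: measurable_tnth.
- rewrite (integral_two_point _ _ q01 (h := fun v : m.-tuple R => (tnth v j - mu j) ^+ 2)).
    by rewrite lee_fin.
  by apply/measurable_funX/measurable_funB; [exact: measurable_tnth | exact: measurable_cst].
Qed.

Lemma two_point_product (R : realType) (m : nat) (k : 'I_m) (q : R)
    (a b : m.-tuple R) :
  (forall j, j != k -> tnth a j = tnth b j) ->
  is_product (two_point q a b) (fun j => two_point q (tnth a j) (tnth b j)).
Proof.
move=> ab B _.
have [[j [jk Bj]] | allB] := pselect (exists j, j != k /\ ~ B j (tnth a j)).
  have Fj0 : two_point q (tnth a j) (tnth b j) (B j) = 0%E.
    by apply: two_point_set0; rewrite -?ab.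
  rewrite (bigD1 j) // Fj0 [RHS]/= mul0e.
  by apply: two_point_set0 => /(_ j); rewrite -?ab.
have {}allB j : j != k -> B j (tnth a j).
  by move=> jk; apply: contrapT => Bj; apply: allB; exists j.
have Fj1 j : j != k -> two_point q (tnth a j) (tnth b j) (B j) = 1%E.
  by move=> jk; apply: two_point_setT; rewrite -?ab //; exact: allB.
rewrite (bigD1 k) // big1 // [RHS]/= mule1.
rewrite /two_point /= /pushforward; congr (bernoulli_prob q _).
apply/seteqP; split=> -[] /= Bx //= j; have [->|jk] := eqVneq j k => //.
- exact: allB.
- by rewrite -ab //; exact: allB.
Qed.

Section PostedPrice.
Variables (R : realType) (m : nat) (k : 'I_m) (t : R).

Definition posted_price : mechanism R m :=
  (fun v j => if j == k then (if t <= tnth v k then 1 else 0) else 0,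
   fun v => if t <= tnth v k then t else 0).

Lemma utility_posted_price v w :
  utility posted_price v w = if t <= tnth w k then tnth v k - t else 0.
Proof.
rewrite /utility /alloc /pay /= (bigD1 k) //= eqxx big1 ?addr0.
  by case: ifP; rewrite ?mul1r ?mul0r ?subr0.
by move=> j /negPf ->; rewrite mul0r.
Qed.

Lemma posted_price_truthful : 0 <= t -> truthful posted_price.
Proof.
move=> t0; split.
- by move=> v _ j; rewrite /alloc /=; do 2?case: ifP; rewrite ?ler01 ?lexx.
- by move=> v _; rewrite /pay /=; case: ifP.
- move=> v w _ _; rewrite !utility_posted_price.
  case: ifP => tw; case: ifP => tv; rewrite ?lexx ?subr_ge0 //.
  by rewrite subr_le0 ltW // ltNge tv.
- by move=> v _; rewrite utility_posted_price; case: ifP; rewrite ?subr_ge0.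
- apply: measurable_fun_ifT => //.
  by apply: measurable_fun_ler => //; exact: measurable_tnth.
Qed.

End PostedPrice.

Lemma le_eratio (R : realType) (c y z : R) (o : \bar R) :
  0 <= y <= z -> c * z <= 1 -> (1 <= o)%E -> (c%:E <= eratio o y%:E)%E.
Proof.
case/andP=> y0 yz cz o1; rewrite /eratio.
have [-> | y_neq0] := eqVneq y 0; first by rewrite eqxx leey.
have y_gt0 : 0 < y by rewrite lt0r y_neq0.
rewrite eqe (negPf y_neq0) /= (le_trans _ (lee_wpmul2r _ o1)) ?mul1e ?lee_fin ?invr_ge0 //.
have z_gt0 : 0 < z := lt_le_trans y_gt0 yz.
apply: (@le_trans _ _ z^-1); first by rewrite -[z^-1]mul1r ler_pdivlMr.
by rewrite lef_pV2 ?posrE.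
Qed.

Lemma le_APX (R : realType) (m : nat) (mu sigma : 'I_m -> R) (c : R) :
  (forall A : mechanism R m, truthful A ->
     exists2 F, in_class mu sigma F & (c%:E <= eratio (OPT F) (REV A F))%E) ->
  (c%:E <= APX mu sigma)%E.
Proof.
move=> hard; apply/ereal_infP => _ [A /hard [F F_in ratio] <-].
by apply: le_trans ratio _; apply: ereal_sup_ubound; exists F.
Qed.

Lemma invr_ge1_itv (R : realType) (t : R) : 1 <= t -> 0 <= t^-1 <= 1.
Proof. by move=> t1; rewrite invr_ge0 invf_le1 ?(le_trans ler01) ?(lt_le_trans ltr01). Qed.

Section Grid.
Variables (R : realType) (h : R).
Hypothesis h_gt0 : 0 < h.

Definition grid (i : nat) : R := 1 + i%:R * h.

Definition grid_sum (i : nat) : R := \sum_(j < i) h / grid j.+1.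

Lemma grid_ge1 i : 1 <= grid i.
Proof. by rewrite lerDl mulr_ge0 // ltW. Qed.

Lemma grid_gt0 i : 0 < grid i.
Proof. exact: lt_le_trans ltr01 (grid_ge1 i). Qed.

Lemma gridS i : grid i.+1 = grid i + h.
Proof. by rewrite /grid -addn1 natrD; ring. Qed.

Lemma grid_le i j : (i <= j)%N -> grid i <= grid j.
Proof. by move=> ij; rewrite lerD2l ler_wpM2r ?ler_nat // ltW. Qed.

Lemma grid_sumS i : grid_sum i.+1 = grid_sum i + h / grid i.+1.
Proof. by rewrite /grid_sum big_ord_recr. Qed.

Lemma ln_grid_le i : ln (grid i) - i%:R * h ^+ 2 <= grid_sum i.
Proof.
elim: i => [|i IH].
  by rewrite /grid_sum big_ord0 /grid !mul0r addr0 ln1 subr0.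
have gi := grid_gt0 i; have gi1 := grid_gt0 i.+1.
have ln_step : ln (grid i.+1) <= ln (grid i) + h / grid i.
  have -> : grid i.+1 = grid i * (1 + h / grid i).
    by rewrite gridS; field; rewrite gt_eqF.
  have hg : 0 < h / grid i by rewrite divr_gt0.
  rewrite lnM ?posrE //; last exact: addr_gt0.
  by rewrite lerD2l le_ln1Dx // (lt_trans _ hg) // ltrN10.
have sum_step : h / grid i - h ^+ 2 <= h / grid i.+1.
  have -> : h / grid i = h / grid i.+1 + h ^+ 2 / (grid i * grid i.+1).
    by rewrite gridS; field; rewrite !gt_eqF // -gridS.
  rewrite -addrA gerDl subr_le0 ler_pdivrMr ?mulr_gt0 // ler_peMr ?sqr_ge0 //.
  by rewrite -[1]mulr1 ler_pM ?grid_ge1.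
by rewrite grid_sumS -natr1 mulrDl mul1r; lra.
Qed.

Lemma grid_sum_le i : grid_sum i <= i%:R * h.
Proof.
elim: i => [|i IH]; first by rewrite /grid_sum big_ord0 mul0r.
rewrite grid_sumS -natr1 mulrDl mul1r lerD //.
by rewrite ler_pdivrMr ?grid_gt0 // ler_peMr ?grid_ge1 // ltW.
Qed.

Lemma grid_sum_ge0 i : 0 <= grid_sum i.
Proof. by apply: sumr_ge0 => j _; rewrite divr_ge0 // ltW // grid_gt0. Qed.

End Grid.

Lemma exists_fine_grid (R : realType) (rho eps : R) : 0 < rho -> 0 < eps ->
  exists2 h, 0 < h & exists2 n : nat, n%:R * h = rho ^+ 2 & n%:R * h ^+ 2 <= eps / 2.
Proof.
move=> rho0 eps0; set n := (Num.truncn (2 * rho ^+ 4 / eps)).+1.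
have n0 : 0 < n%:R :> R by rewrite ltr0n.
exists (rho ^+ 2 / n%:R); first by rewrite divr_gt0 ?exprn_gt0.
exists n; first by rewrite mulrC mulfVK ?gt_eqF.
have : 2 * rho ^+ 4 / eps < n%:R by rewrite truncnS_gt.
rewrite ltr_pdivrMr // => n_big.
have -> : n%:R * (rho ^+ 2 / n%:R) ^+ 2 = rho ^+ 4 / n%:R by field; rewrite gt_eqF.
rewrite ler_pdivrMr //; lra.
Qed.

(* u, X and P are the utility, the allocation of item k and the payment along
   the valuations in which only the value s of item k varies; D bounds the
   welfare contributed by the other items. *)
Section Envelope.
Variables (R : realType) (u P X : R -> R) (D : R).
Hypotheses (D_ge0 : 0 <= D) (u_ge0 : forall s, 0 <= s -> 0 <= u s).
Hypothesis u_tangent :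
  forall s s', 0 <= s -> 0 <= s' -> u s + X s * (s' - s) <= u s'.
Hypothesis X_le1 : forall s, 0 <= s -> X s <= 1.
Hypothesis welfare_le : forall s, 0 <= s -> u s + P s <= X s * s + D.

(* Discrete form of (u(s)/s)' = (s X(s) - u(s)) / s^2 >= (a - D) / s. *)
Lemma grid_sum_le_utility_ratio h a i : 0 < h ->
  (forall j, (j <= i)%N -> a * grid h j < P (grid h j)) ->
  (a - D) * grid_sum h i <= u (grid h i) / grid h i.
Proof.
move=> h0; elim: i => [|i IH] overcharged.
  by rewrite /grid_sum big_ord0 mulr0 divr_ge0 ?u_ge0 // ltW // grid_gt0.
have gi := grid_gt0 h0 i; have gi1 := grid_gt0 h0 i.+1.
set w := u (grid h i) / grid h i.
have ratio_i : (a - D) * grid_sum h i <= w.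
  by apply: IH => j ji; apply: overcharged; rewrite (leq_trans ji).
have slope : w + (a - D) <= X (grid h i).
  rewrite -(ler_pM2r gi) mulrDl mulrBl /w mulfVK ?gt_eqF //.
  have : D <= D * grid h i by rewrite ler_peMr ?grid_ge1.
  have := welfare_le (ltW gi); have := overcharged i (leqnSn i); lra.
have := u_tangent (ltW gi) (ltW gi1); rewrite gridS addrAC subrr add0r.
rewrite -gridS grid_sumS ler_pdivlMr //; apply: le_trans.
have -> : (a - D) * (grid_sum h i + h / grid h i.+1) * grid h i.+1
        = (a - D) * grid_sum h i * grid h i.+1 + (a - D) * h.
  by field; rewrite gt_eqF.
have -> : u (grid h i) = w * grid h i by rewrite mulfVK ?gt_eqF.
have := ler_wpM2r (ltW h0) slope; have := ler_wpM2r (ltW gi1) ratio_i.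
rewrite gridS; lra.
Qed.

Lemma overcharge_bound h a n : 0 < h ->
  (forall i, (i <= n)%N -> a * grid h i < P (grid h i)) ->
  a * (1 + grid_sum h n) < 1 + D * (1 + grid_sum h n).
Proof.
move=> h0 overcharged.
have ratio := grid_sum_le_utility_ratio h0 overcharged.
set T := grid h n in ratio *.
have T1 : 1 <= T := grid_ge1 h0 n.
have T0 : 0 < T by lra.
have ratio_lt : u T / T < 1 + D - a.
  rewrite ltr_pdivrMr // mulrBl mulrDl mul1r.
  have : X T * T <= T by rewrite ler_piMl ?X_le1 // ltW.
  have : D <= D * T by rewrite ler_peMr.
  have := welfare_le (ltW T0); have : a * T < P T := overcharged n (leqnn n).
  lra.
have := le_lt_trans ratio ratio_lt; rewrite mulrBl !mulrDr !mulr1; lra.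
Qed.

Lemma exists_grid_price_low_payment (c h : R) (n : nat) : 0 < h -> 0 < c ->
  c * (1 + 2 * D * (1 + grid_sum h n)) <= 1 + grid_sum h n ->
  exists2 i, (i <= n)%N & c * (P (grid h i) / grid h i + D) <= 1.
Proof.
move=> h0 c_gt0 target; apply: contrapT => no_cheap.
set a := c^-1 - D.
have overcharged i : (i <= n)%N -> a * grid h i < P (grid h i).
  move=> ni; rewrite ltNge; apply/negP => cheap; apply: no_cheap; exists i => //.
  have : P (grid h i) / grid h i + D <= c^-1.
    by rewrite -lerBrDr ler_pdivrMr ?grid_gt0.
  by move/(ler_wpM2l (ltW c_gt0)); rewrite mulfV ?gt_eqF.
have := overcharge_bound h0 overcharged; move: target; set S := grid_sum h n.
rewrite /a -(ltr_pM2l c_gt0) mulrBl mulrBr mulrA mulfV ?gt_eqF // mul1r.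
rewrite !mulrDr; lra.
Qed.

Hypothesis P_ge0 : forall s, 0 <= s -> 0 <= P s.

Lemma exists_price_low_payment (rho eps : R) : 0 < rho -> 0 < eps ->
  4 * D * (1 + rho ^+ 2) ^+ 2 <= eps ->
  exists2 t, 1 <= t <= 1 + rho ^+ 2 &
    (1 - eps + ln (1 + rho ^+ 2)) * (P t / t + D) <= 1.
Proof.
move=> rho0 eps0 small_D; set c := 1 - eps + ln _.
have [c_le0 | c_gt0] := lerP c 0.
  exists 1; first by rewrite lexx lerDl sqr_ge0.
  by rewrite divr1 (le_trans _ ler01) // mulr_le0_ge0 // addr_ge0 // P_ge0.
have [h h0 [n nh nh2]] := exists_fine_grid rho0 eps0.
have [|i ni cheap] := exists_grid_price_low_payment (n := n) h0 c_gt0.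
  have := ln_grid_le h0 n; have := grid_sum_le h0 n; have := grid_sum_ge0 h0 n.
  rewrite -[grid h n]/(1 + n%:R * h) nh; set S := grid_sum h n => S_ge0 S_le S_ge.
  have c_le : c <= 1 + rho ^+ 2.
    by rewrite /c; have := le_ln1Dx (lt_trans (ltrN10 R) (exprn_gt0 2 rho0)); lra.
  have : c * (2 * D * (1 + S)) <= eps / 2.
    apply: le_trans (_ : (1 + rho ^+ 2) * (2 * D * (1 + rho ^+ 2)) <= _); last lra.
    apply: ler_pM => //; first exact: ltW.
      by rewrite !mulr_ge0 // addr_ge0.
    by rewrite ler_wpM2l ?mulr_ge0 // lerD2l.
  by rewrite /c mulrDr mulr1; lra.
exists (grid h i) => //.
by rewrite grid_ge1 //= (le_trans (grid_le h0 ni)) // /grid nh.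
Qed.

End Envelope.

Section ItemLine.
Variables (R : realType) (m : nat) (k : 'I_m) (delta : R).
Hypothesis delta_ge0 : 0 <= delta.

Definition item_line (s : R) : m.-tuple R :=
  [tuple if j == k then s else delta | j < m].

Lemma tnth_item_line s j : tnth (item_line s) j = if j == k then s else delta.
Proof. by rewrite tnth_mktuple. Qed.

Lemma item_line_nonneg s : 0 <= s -> nonneg_vec (item_line s).
Proof. by move=> s0 j; rewrite tnth_item_line; case: ifP. Qed.

Lemma utility_item_line (A : mechanism R m) s s' w :
  utility A (item_line s') w = utility A (item_line s) w + alloc A w k * (s' - s).
Proof.
rewrite /utility (bigD1 k) //= [in RHS](bigD1 k) //= !tnth_item_line eqxx.
under eq_bigr => j /negPf jk do rewrite tnth_item_line jk.
under [in RHS]eq_bigr => j /negPf jk do rewrite tnth_item_line jk.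
by ring.
Qed.

Definition hard_dist (t : R) : probability (m.-tuple R) R :=
  two_point t^-1 (item_line t) (item_line 0).

Definition hard_marginal (t : R) (j : 'I_m) : probability R R :=
  two_point t^-1 (tnth (item_line t) j) (tnth (item_line 0) j).

Lemma hard_dist_product t : is_product (hard_dist t) (hard_marginal t).
Proof.
rewrite /hard_dist /hard_marginal; apply: (two_point_product (k := k)) => j /negPf jk.
by rewrite !tnth_item_line jk.
Qed.

Section HardDistMoments.
Variables (t : R) (sigma : 'I_m -> R).
Hypotheses (t_ge1 : 1 <= t) (var_k : t - 1 <= sigma k ^+ 2).

Let t_gt0 : 0 < t. Proof. exact: lt_le_trans ltr01 t_ge1. Qed.

Let prob_t : 0 <= t^-1 <= 1 := invr_ge1_itv t_ge1.

Let mean j : t^-1 * tnth (item_line t) j + (1 - t^-1) * tnth (item_line 0) j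
             = tnth (item_line 1) j.
Proof.
rewrite !tnth_item_line; case: ifP => _; last by ring.
by rewrite mulr0 addr0 mulVf ?gt_eqF.
Qed.

Let var j : t^-1 * (tnth (item_line t) j - tnth (item_line 1) j) ^+ 2
            + (1 - t^-1) * (tnth (item_line 0) j - tnth (item_line 1) j) ^+ 2
            <= sigma j ^+ 2.
Proof.
rewrite !tnth_item_line; case: ifP => [/eqP -> | _].
  have -> : t^-1 * (t - 1) ^+ 2 + (1 - t^-1) * (0 - 1) ^+ 2 = t - 1.
    by field; rewrite gt_eqF.
  exact: var_k.
by rewrite subrr expr0n /= !mulr0 addr0 sqr_ge0.
Qed.

Lemma hard_marginal_ok j :
  marginal_ok (tnth (item_line 1) j) (sigma j) (hard_marginal t j).
Proof.
exact: two_point_marginal_ok prob_t (item_line_nonneg (ltW t_gt0) j)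
  (item_line_nonneg (lexx 0) j) (mean j) (var j).
Qed.

Lemma hard_dist_in_class : in_class (tnth (item_line 1)) sigma (hard_dist t).
Proof.
exact: two_point_in_class prob_t (item_line_nonneg (ltW t_gt0))
  (item_line_nonneg (lexx 0)) mean var.
Qed.

End HardDistMoments.

Lemma OPT_hard_dist_ge1 t : 1 <= t -> (1 <= OPT (hard_dist t))%E.
Proof.
move=> t1; have t_gt0 : 0 < t := lt_le_trans ltr01 t1.
have posted_ok := posted_price_truthful k (ltW t_gt0).
apply: (@le_trans _ _ (REV (posted_price k t) (hard_dist t))); last first.
  by apply: ereal_sup_ubound; exists (posted_price k t).
rewrite /REV integral_two_point ?invr_ge1_itv //; last by case: posted_ok.
by rewrite /pay /= !tnth_item_line eqxx lexx (lt_geF t_gt0) mulr0 addr0 mulVf ?gt_eqF.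
Qed.

Variable A : mechanism R m.
Hypothesis A_truthful : truthful A.

Lemma item_line_tangent s s' : 0 <= s -> 0 <= s' ->
  utility A (item_line s) (item_line s) + alloc A (item_line s) k * (s' - s)
  <= utility A (item_line s') (item_line s').
Proof.
case: A_truthful => _ _ IC _ _ s0 s'0.
by rewrite -utility_item_line; apply: IC; exact: item_line_nonneg.
Qed.

Lemma item_line_welfare_le s : 0 <= s ->
  utility A (item_line s) (item_line s) + pay A (item_line s)
  <= alloc A (item_line s) k * s + m%:R * delta.
Proof.
case: A_truthful => alloc01 _ _ _ _ s0.
have x01 := alloc01 _ (item_line_nonneg s0).
rewrite /utility subrK (bigD1 k) //= tnth_item_line eqxx lerD2l.
apply: le_trans (_ : \sum_(j < m) delta <= _); last first.
  by rewrite sumr_const card_ord mulr_natl.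
rewrite big_mkcond; apply: ler_sum => j _; case: ifPn => // /negPf jk.
by rewrite tnth_item_line jk ler_piMl //; case/andP: (x01 j).
Qed.

Lemma exists_item_price_low_payment (rho eps : R) : 0 < rho -> 0 < eps ->
  4 * (m%:R * delta) * (1 + rho ^+ 2) ^+ 2 <= eps ->
  exists2 t, 1 <= t <= 1 + rho ^+ 2 &
    (1 - eps + ln (1 + rho ^+ 2)) * (pay A (item_line t) / t + m%:R * delta) <= 1.
Proof.
case: (A_truthful) => alloc01 pay_ge0 _ IR _.
apply: (@exists_price_low_payment _ (fun s => utility A (item_line s) (item_line s))
  _ (fun s => alloc A (item_line s) k)).
- by rewrite mulr_ge0.
- by move=> s s0; apply: IR; exact: item_line_nonneg.
- exact: item_line_tangent.
- by move=> s s0; case/andP: (alloc01 _ (item_line_nonneg s0) k).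
- exact: item_line_welfare_le.
- by move=> s s0; apply: pay_ge0; exact: item_line_nonneg.
Qed.

Lemma pay_item_line0_le : pay A (item_line 0) <= m%:R * delta.
Proof.
case: (A_truthful) => _ _ _ IR _.
have := item_line_welfare_le (lexx 0); rewrite mulr0 add0r.
by have := IR _ (item_line_nonneg (lexx 0)); lra.
Qed.

Lemma hard_dist_ratio (c t : R) : 1 <= t ->
  c * (pay A (item_line t) / t + m%:R * delta) <= 1 ->
  (c%:E <= eratio (OPT (hard_dist t)) (REV A (hard_dist t)))%E.
Proof.
move=> t1 cheap; case: (A_truthful) => _ pay_ge0 _ _ pay_meas.
have /andP[q0 q1] := invr_ge1_itv t1.
rewrite /REV integral_two_point ?invr_ge1_itv //.
apply: le_eratio cheap (OPT_hard_dist_ge1 t1).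
have Pt := pay_ge0 _ (item_line_nonneg (le_trans ler01 t1)).
have P0 := pay_ge0 _ (item_line_nonneg (lexx 0)).
have P0_le := pay_item_line0_le.
apply/andP; split; first by rewrite addr_ge0 ?mulr_ge0 ?subr_ge0.
rewrite mulrC lerD2l; apply: le_trans P0_le.
by rewrite ler_piMl // lerBlDr lerDl.
Qed.

Lemma exists_hard_dist (rho eps : R) : 0 < rho -> 0 < eps ->
  4 * (m%:R * delta) * (1 + rho ^+ 2) ^+ 2 <= eps ->
  exists2 t, 1 <= t <= 1 + rho ^+ 2 &
    ((1 - eps + ln (1 + rho ^+ 2))%:E
     <= eratio (OPT (hard_dist t)) (REV A (hard_dist t)))%E.
Proof.
move=> rho0 eps0 small_delta.
have [t t_range cheap] := exists_item_price_low_payment rho0 eps0 small_delta.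
by exists t => //; apply: hard_dist_ratio cheap; case/andP: t_range.
Qed.

End ItemLine.

Unset Implicit Arguments.

Theorem theorem5 (R : realType) (m : nat) (hm : (0 < m)%N)
  (r : 'I_m -> R) (hr : forall j, 0 < r j) (eps : R) (heps : 0 < eps) :
  let rmax := \big[Num.max/0]_(j < m) r j in
  let c := 1 - eps + ln (1 + rmax ^+ 2) in
  exists mu sigma : 'I_m -> R,
    [/\ (forall j, 0 < mu j),
        (forall j, 0 <= sigma j),
        (forall j, sigma j / mu j = r j),
        (forall A : mechanism R m, truthful A ->
           exists (F : probability (m.-tuple R) R) (Fs : 'I_m -> probability R R),
             [/\ is_product F Fs,
                 (forall j, marginal_ok (mu j) (sigma j) (Fs j)) &
                 (c%:E <= eratio (OPT F) (REV A F))%E]) &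
        (c%:E <= APX mu sigma)%E].
Proof.
move=> rmax c; rewrite {}/c.
pose k := [arg max_(i > Ordinal hm) r i]%O.
have -> : rmax = r k by apply: bigmax_eq_arg => // i _; exact: ltW.
set rho := r k; have rho_gt0 : 0 < rho := hr k.
have rho2_gt0 : 0 < 1 + rho ^+ 2 by rewrite ltr_pwDl ?sqr_ge0.
pose delta := eps / (4 * m%:R * (1 + rho ^+ 2) ^+ 2).
have delta_gt0 : 0 < delta by rewrite divr_gt0 // !mulr_gt0 ?ltr0n ?exprn_gt0.
have small_delta : 4 * (m%:R * delta) * (1 + rho ^+ 2) ^+ 2 <= eps.
  suff -> : 4 * (m%:R * delta) * (1 + rho ^+ 2) ^+ 2 = eps by [].
  by rewrite /delta; field; rewrite !lt0r_neq0 ?ltr0n.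
have hard A (A_ok : truthful A) :=
  exists_hard_dist k (ltW delta_gt0) A_ok rho_gt0 heps small_delta.
pose mu := tnth (item_line k delta 1); pose sigma j := r j * mu j.
have mu_gt0 j : 0 < mu j by rewrite /mu tnth_item_line; case: ifP.
have var_k t : t <= 1 + rho ^+ 2 -> t - 1 <= sigma k ^+ 2.
  by rewrite /sigma /mu tnth_item_line eqxx mulr1 -/rho; lra.
exists mu, sigma; split => //.
- by move=> j; rewrite mulr_ge0 // ltW.
- by move=> j; rewrite mulfK // gt_eqF.
- move=> A /hard [t /andP[t1 t_le] ratio].
  exists (hard_dist k delta t), (hard_marginal k delta t); split => //.
    exact: hard_dist_product.
  move=> j; exact (hard_marginal_ok (ltW delta_gt0) t1 (var_k t t_le) j).
- apply: le_APX => A /hard [t /andP[t1 t_le] ratio]; exists (hard_dist k delta t) => //.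
  exact (hard_dist_in_class (ltW delta_gt0) t1 (var_k t t_le)).
Qed.
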